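(* Let $g:\mathbb{R}^n\to\mathbb{R}\cup\{+\infty\}$ be a proper closed convex function and let $f=f_1-f_2$, where $f_1,f_2:\mathbb{R}^n\to\mathbb{R}$ are convex differentiable functions such that $\nabla f_1$ is Lipschitz continuous with modulus $L>0$, $\nabla f_2$ is Lipschitz continuous with modulus $l\ge 0$, and $L\ge l$. Let $F=f+g$, and assume $\inf F>-\infty$ and that this infimum is attained. Let $\{x^k\}$ be generated by Algorithm 1 (described in the context) with $\{\beta_k\}\subseteq\big[0,\sqrt{L/(L+l)}\,\big]$, let $\bar\beta=\sup_k\beta_k$, and let $\alpha\in\big[\tfrac{L+l}{2}\bar\beta^2,\tfrac{L}{2}\big]$. Then: (i) for every $z\in\operatorname{dom} g$ and every $k\ge 0$, $$F(x^{k+1})\le F(z)+\frac{L+l}{2}\|z-y^k\|^2-\frac{L}{2}\|x^{k+1}-z\|^2;$$ (ii) for all $k\ge0$, $$H_{k+1,\alpha}-H_{k,\alpha}\le\Big(-\frac L2+\alpha\Big)\|x^{k+1}-x^k\|^2+\Big(\frac{L+l}{2}\beta_k^2-\alpha\Big)\|x^k-x^{k-1}\|^2;$$ (iii) the sequence $\{H_{k,\alpha}\}$ is nonincreasing.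
   Context: For a proper closed convex $h$, $\mathrm{Prox}_h(v)=\arg\min_{x\in\mathbb{R}^n}\{h(x)+\tfrac12\|x-v\|^2\}$. Algorithm 1 (proximal gradient algorithm with extrapolation): choose $x^0\in\operatorname{dom} g$ and $\{\beta_k\}\subseteq[0,\sqrt{L/(L+l)}]$, set $x^{-1}=x^0$, and for $k=0,1,2,\dots$ set $y^k=x^k+\beta_k(x^k-x^{k-1})$ and $x^{k+1}=\mathrm{Prox}_{\frac1L g}\big(y^k-\tfrac1L\nabla f(y^k)\big)$. For $\alpha\ge0$, $H_{k,\alpha}:=F(x^k)+\alpha\|x^k-x^{k-1}\|^2$. *)

From HB Require Import structures.
From mathcomp Require Import all_boot all_order all_algebra.
From mathcomp Require Import all_classical all_reals all_analysis.
Set Implicit Arguments. Unset Strict Implicit. Unset Printing Implicit Defensive.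
Import Order.TTheory GRing.Theory Num.Theory.
Import numFieldNormedType.Exports.
Local Open Scope ring_scope.

Section Defs.
Variables (R : realType) (n : nat).
Local Notation vec := 'rV[R]_n.

Definition dotv (u v : vec) : R := \sum_(i < n) u ord0 i * v ord0 i.
Definition enorm (u : vec) : R := Num.sqrt (dotv u u).

Definition convex_fun (f : vec -> R) : Prop :=
  forall (x y : vec) (t : R), 0 <= t <= 1 ->
    f (t *: x + (1 - t) *: y) <= t * f x + (1 - t) * f y.

Definition is_gradient (f : vec -> R) (G : vec -> vec) : Prop :=
  forall x : vec, differentiable f x /\ forall h : vec, 'd f x h = dotv (G x) h.

Definition lipschitz_with (G : vec -> vec) (L : R) : Prop :=
  forall x y : vec, enorm (G x - G y) <= L * enorm (x - y).

Definition in_dom (g : vec -> \bar R) (x : vec) : Prop := (g x < +oo)%E.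

Definition proper_fun (g : vec -> \bar R) : Prop :=
  (forall x, -oo < g x)%E /\ exists x, in_dom g x.

(* closed = lower semicontinuous *)
Definition lsc_fun (g : vec -> \bar R) : Prop :=
  forall (x : vec) (a : R), (a%:E < g x)%E ->
    exists2 d : R, 0 < d & forall y, enorm (y - x) < d -> (a%:E < g y)%E.

Definition convex_efun (g : vec -> \bar R) : Prop :=
  forall (x y : vec) (t : R), 0 <= t <= 1 ->
    (g (t *: x + (1 - t) *: y)%R <= t%:E * g x + (1 - t)%R%:E * g y)%E.

(* p = Prox_h(v), i.e. p minimizes h(.) + 1/2 ||. - v||^2
   (the minimizer is unique for proper closed convex h) *)
Definition is_prox (h : vec -> \bar R) (v p : vec) : Prop :=
  forall z : vec,
    (h p + (enorm (p - v)%R ^+ 2 / 2)%R%:E <= h z + (enorm (z - v)%R ^+ 2 / 2)%R%:E)%E.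

(* Algorithm 1: x^{-1} = x^0 is encoded by x (k.-1) with 0.-1 = 0 *)
Definition extrap (x : nat -> vec) (beta : nat -> R) (k : nat) : vec :=
  x k + beta k *: (x k - x k.-1).

Definition alg1 (g : vec -> \bar R) (gradf : vec -> vec) (L : R)
    (beta : nat -> R) (x : nat -> vec) : Prop :=
  forall k, is_prox (fun u => (L^-1)%:E * g u)%E
              (extrap x beta k - L^-1 *: gradf (extrap x beta k)) (x k.+1).

Definition Hseq (F : vec -> \bar R) (x : nat -> vec) (alpha : R) (k : nat) : \bar R :=
  (F (x k) + (alpha * enorm (x k - x k.-1) ^+ 2)%R%:E)%E.

End Defs.

From HB Require Import structures.
From mathcomp Require Import all_boot all_order all_algebra.
From mathcomp Require Import all_classical all_reals all_analysis.
From mathcomp Require Import ring lra.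
Import Order.TTheory GRing.Theory Num.Theory.
Import numFieldNormedType.Exports.
Local Open Scope ring_scope.
Set Implicit Arguments. Unset Strict Implicit. Unset Printing Implicit Defensive.

(* Part (i) is the three-point estimate of one proximal gradient step at y = y^k:
   the descent lemma for f1 and the gradient inequality for f2 bound f(x^{k+1})
   from above, the gradient inequality for f1 and the descent lemma for f2 bound
   f(z) from below, and the optimality condition of the proximal step bounds g.
   Taking z = x^k and using x^k - y^k = -beta_k (x^k - x^{k-1}) gives (ii), whose
   coefficients are nonpositive for alpha in the stated range; hence (iii).
   The descent lemma itself is proved without integration: convexity gives it
   with constant L, and splitting the step into two halves improves any valid
   constant c to c/2 + L/4, whose fixed point is L/2. *)

Local Open Scope classical_set_scope.

Lemma ler_of_geometric_bound (R : realType) (a b c : R) :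
  (forall k, a <= b + c * 2^-1 ^+ k) -> a <= b.
Proof.
move=> bound; have : (fun k => b + geometric c 2^-1 k) @ \oo --> b + 0.
  apply: cvgD; first exact: cvg_cst.
  by apply: cvg_geometric; rewrite gtr0_norm ?invr_lt1 ?ltr1n ?unitfE.
rewrite addr0 => /cvgr_to_ge; apply.
by near=> k; exact: bound.
Unshelve. all: by end_near.
Qed.

Lemma ler_of_forall_small (R : realType) (a b c : R) :
  (forall t, 0 < t <= 1 -> a <= b + t * c) -> a <= b.
Proof.
move=> bound; apply: (@ler_of_geometric_bound _ _ _ c) => k.
rewrite mulrC; apply: bound.
by rewrite exprn_gt0 ?invr_gt0 //= exprn_ile1 ?invr_ge0 // invf_le1 // ler1n.
Qed.

Local Close Scope classical_set_scope.

Section EuclideanSpace.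
Variables (R : realType) (n : nat).
Implicit Types (u v w : 'rV[R]_n) (a : R).

Lemma dotvC u v : dotv u v = dotv v u.
Proof. by apply: eq_bigr => i _; rewrite mulrC. Qed.

Lemma dotvDl u v w : dotv (u + v) w = dotv u w + dotv v w.
Proof. by rewrite /dotv -big_split; apply: eq_bigr => i _; rewrite mxE mulrDl. Qed.

Lemma dotvZl a u v : dotv (a *: u) v = a * dotv u v.
Proof. by rewrite /dotv mulr_sumr; apply: eq_bigr => i _; rewrite mxE mulrA. Qed.

Lemma dotvNl u v : dotv (- u) v = - dotv u v.
Proof. by rewrite -scaleN1r dotvZl mulN1r. Qed.

Lemma dotvBl u v w : dotv (u - v) w = dotv u w - dotv v w.
Proof. by rewrite dotvDl dotvNl. Qed.

Lemma dotvZr a u v : dotv u (a *: v) = a * dotv u v.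
Proof. by rewrite dotvC dotvZl dotvC. Qed.

Lemma dotvNr u v : dotv u (- v) = - dotv u v.
Proof. by rewrite dotvC dotvNl dotvC. Qed.

Lemma dotvDr u v w : dotv u (v + w) = dotv u v + dotv u w.
Proof. by rewrite dotvC dotvDl !(dotvC u). Qed.

Lemma dotvBr u v w : dotv u (v - w) = dotv u v - dotv u w.
Proof. by rewrite dotvDr dotvNr. Qed.

Lemma dotv_ge0 u : 0 <= dotv u u.
Proof. by apply: sumr_ge0 => i _; rewrite -expr2 sqr_ge0. Qed.

Lemma dotv_eq0 u : dotv u u = 0 -> u = 0.
Proof.
move=> /eqP; rewrite psumr_eq0 => [/allP u0|i _]; last by rewrite -expr2 sqr_ge0.
apply/rowP => i; rewrite mxE; apply/eqP.
by have := u0 i (mem_index_enum i); rewrite mulf_eq0 orbb.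
Qed.

Lemma enorm_sqr u : enorm u ^+ 2 = dotv u u.
Proof. by rewrite sqr_sqrtr // dotv_ge0. Qed.

Lemma dotv_sqrD u v : dotv (u + v) (u + v) = dotv u u + 2 * dotv u v + dotv v v.
Proof. by rewrite !(dotvDl, dotvDr) (dotvC v u); ring. Qed.

Lemma dotv_sqrB u v : dotv (u - v) (u - v) = dotv u u - 2 * dotv u v + dotv v v.
Proof. by rewrite dotv_sqrD !(dotvNl, dotvNr) opprK mulrN. Qed.

Lemma dotv0l v : dotv 0 v = 0.
Proof. by rewrite /dotv big1 // => i _; rewrite mxE mul0r. Qed.

Lemma enorm_eq0 u : enorm u = 0 -> u = 0.
Proof. by move=> u0; apply: dotv_eq0; rewrite -enorm_sqr u0 expr0n. Qed.

Lemma dotv_le_enorm u v : dotv u v <= enorm u * enorm v.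
Proof.
set a := enorm u; set b := enorm v.
have gram_ge0 : 0 <= 2 * (a * b) * (a * b - dotv u v).
  have := dotv_ge0 (b *: u - a *: v).
  rewrite dotv_sqrB !(dotvZl, dotvZr) -!enorm_sqr -/a -/b; nra.
have ab_ge0 : 0 <= a * b by rewrite mulr_ge0 ?sqrtr_ge0.
have [ab_gt0|] := ltP 0 (a * b); first by move: gram_ge0; nra.
rewrite le_eqVlt ltNge ab_ge0 orbF mulf_eq0.
case/orP=> /eqP/enorm_eq0 u0; first by rewrite u0 dotv0l.
by rewrite u0 dotvC dotv0l.
Qed.

Lemma lipschitz_dotv (G : 'rV[R]_n -> 'rV[R]_n) (L : R) :
  lipschitz_with G L -> forall u v, dotv (G u - G v) (u - v) <= L * dotv (u - v) (u - v).
Proof.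
move=> G_lip u v; apply: (le_trans (dotv_le_enorm _ _)).
by rewrite -enorm_sqr expr2 mulrA ler_wpM2r ?sqrtr_ge0.
Qed.
End EuclideanSpace.

Section SmoothConvex.
Variables (R : realType) (n : nat) (f : 'rV[R]_n -> R) (G : 'rV[R]_n -> 'rV[R]_n).
Hypotheses (f_convex : convex_fun f) (f_grad : is_gradient f G).

Lemma convex_gradient_le y z : f y + dotv (G y) (z - y) <= f z.
Proof.
have [f_diff dG] := f_grad y.
rewrite -lerBrDl -dG -deriveE //.
have := cvg_dnbhs_at_right (@diff_derivable _ _ _ f y (z - y) f_diff).
move/cvgr_to_le; apply; near=> h.
have h_gt0 : 0 < h by near: h; exact: nbhs_right_gt.
have h_lt1 : h < 1 by near: h; exact: nbhs_right_lt.
rewrite /= /shift.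
have -> : h *: (z - y) + y = h *: z + (1 - h) *: y.
  by rewrite scalerBr scalerBl scale1r addrAC -addrA.
have := @f_convex z y h; rewrite (ltW h_gt0) (ltW h_lt1) => /(_ isT) fzy.
rewrite -[_ *: _]/(h^-1 * _) ler_pdivrMl //; lra.
Unshelve. all: by end_near.
Qed.

Definition bregman y d := f (y + d) - f y - dotv (G y) d.

Variable L : R.
Hypothesis G_lip : lipschitz_with G L.

Lemma bregman_le_lipschitz y d : bregman y d <= L * dotv d d.
Proof.
have := convex_gradient_le (y + d) y; rewrite opprD addrA subrr add0r.
have := lipschitz_dotv G_lip (y + d) y; rewrite addrAC subrr add0r.
rewrite /bregman dotvBl dotvNr; lra.
Qed.

Lemma bregman_halve y d (e := 2^-1 *: d) :
  bregman y d = bregman (y + e) e + bregman y e + dotv (G (y + e) - G y) e.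
Proof.
rewrite /bregman; have -> : y + e + e = y + d.
  by rewrite -addrA -scalerDl (_ : 2^-1 + 2^-1 = 1) ?scale1r //; lra.
rewrite /e dotvBl !dotvZr; lra.
Qed.

Lemma bregman_le_geometric k y d :
  bregman y d <= (L / 2 + L / 2 * 2^-1 ^+ k) * dotv d d.
Proof.
elim: k y d => [|k IH] y d.
  by rewrite expr0 mulr1 -splitr; exact: bregman_le_lipschitz.
rewrite bregman_halve; set e := 2^-1 *: d.
have hdd : dotv e e = 4^-1 * dotv d d by rewrite /e dotvZl dotvZr mulrA -invfM -natrM.
have := IH (y + e) e; have := IH y e.
have := lipschitz_dotv G_lip (y + e) y; rewrite addrAC subrr add0r.
rewrite hdd exprS; nra.
Qed.

Lemma descent_lemma y d : f (y + d) <= f y + dotv (G y) d + L / 2 * dotv d d.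
Proof.
suff : bregman y d <= L / 2 * dotv d d by rewrite /bregman; lra.
apply: (@ler_of_geometric_bound _ _ _ (L / 2 * dotv d d)) => k.
have -> : L / 2 * dotv d d + L / 2 * dotv d d * 2^-1 ^+ k =
          (L / 2 + L / 2 * 2^-1 ^+ k) * dotv d d by ring.
exact: bregman_le_geometric.
Qed.
End SmoothConvex.

Section Proximal.
Variables (R : realType) (n : nat) (h : 'rV[R]_n -> \bar R).

Lemma is_prox_dom v p z : in_dom h z -> is_prox h v p -> in_dom h p.
Proof.
rewrite /in_dom => hz /(_ z); case: (h p) => // [r _|]; first exact: ltry.
by rewrite addye // leye_eq; case: (h z) hz.
Qed.

Lemma is_prox_optimality v p z (hp hz : R) :
  convex_efun h -> h p = hp%:E -> h z = hz%:E -> is_prox h v p ->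
  hp <= hz + dotv (p - v) (z - p).
Proof.
(* compare p with t z + (1 - t) p and let t -> 0 *)
move=> h_convex hpE hzE px.
apply: (@ler_of_forall_small _ _ _ (dotv (z - p) (z - p) / 2)) => t /andP [t_gt0 t_le1].
set u := t *: z + (1 - t) *: p.
have := px u; rewrite hpE /= !enorm_sqr.
have -> : u - v = (p - v) + t *: (z - p) by apply/rowP => i; rewrite !mxE; ring.
have := @h_convex z p t; rewrite (ltW t_gt0) t_le1 hzE hpE => /(_ isT).
case: (h u) => [r||] //=; rewrite -!EFinM -!EFinD !lee_fin.
rewrite (dotv_sqrD (p - v)) !(dotvZl, dotvZr); nra.
Qed.
End Proximal.

Section Scaling.
Variables (R : realType) (n : nat) (g : 'rV[R]_n -> \bar R) (c : R).

Lemma in_dom_scale u : 0 < c -> in_dom (fun u => c%:E * g u)%E u <-> in_dom g u.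
Proof.
rewrite /in_dom => c_gt0; case: (g u) => [r||]; rewrite ?gt0_muley ?gt0_muleNy ?lte_fin //.
by split=> _; exact: ltry.
Qed.

Lemma convex_efun_scale : 0 <= c -> (forall u, -oo < g u)%E -> convex_efun g ->
  convex_efun (fun u => c%:E * g u)%E.
Proof.
move=> c_ge0 g_gtNy g_convex x y t t01.
have scale_gtNy a u : 0 <= a -> (-oo < a%:E * g u)%E.
  move=> a_ge0; case: (g u) (g_gtNy u) => [r _|_|//]; first by rewrite -EFinM ltNyr.
  by apply: (@lt_le_trans _ _ 0%E) => //; rewrite mule_ge0 ?lee_fin.
rewrite muleCA [X in (_ <= _ + X)%E]muleCA -muleDr //.
  exact: lee_wpmul2l (g_convex x y t t01).
by case/andP: t01 => t_ge0 t_le1; apply: ltninfty_adde_def; rewrite inE scale_gtNy ?subr_ge0.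
Qed.

Lemma is_prox_scale_dom v p z : 0 < c -> in_dom g z ->
  is_prox (fun u => c%:E * g u)%E v p -> in_dom g p.
Proof.
move=> c_gt0 z_dom px; apply/(in_dom_scale _ c_gt0).
by apply: (is_prox_dom (z := z) _ px); apply/(in_dom_scale _ c_gt0).
Qed.
End Scaling.

Section ProximalGradient.
Variables (R : realType) (n : nat) (g : 'rV[R]_n -> \bar R).
Variables (f1 f2 : 'rV[R]_n -> R) (G1 G2 : 'rV[R]_n -> 'rV[R]_n) (L l : R).
Hypotheses (g_gtNy : forall u, (-oo < g u)%E) (g_convex : convex_efun g).
Hypotheses (f1_convex : convex_fun f1) (f2_convex : convex_fun f2).
Hypotheses (f1_grad : is_gradient f1 G1) (f2_grad : is_gradient f2 G2).
Hypotheses (L_gt0 : 0 < L) (G1_lip : lipschitz_with G1 L) (G2_lip : lipschitz_with G2 l).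

Local Notation G := (fun u => G1 u - G2 u).
Local Notation F := (fun u => ((f1 u - f2 u)%:E + g u)%E).

Lemma dc_descent y p z :
  f1 p - f2 p <= f1 z - f2 z + dotv (G y) (p - z)
                 + L / 2 * dotv (p - y) (p - y) + l / 2 * dotv (z - y) (z - y).
Proof.
have := descent_lemma f1_convex f1_grad G1_lip y (p - y).
have := descent_lemma f2_convex f2_grad G2_lip y (z - y).
have := convex_gradient_le f1_convex f1_grad y z.
have := convex_gradient_le f2_convex f2_grad y p.
have -> : p - z = (p - y) - (z - y) by apply/rowP => i; rewrite !mxE; ring.
rewrite !(addrC y) !subrK !(dotvBl, dotvBr); lra.
Qed.

Lemma prox_grad_step y p z :
  is_prox (fun u => (L^-1)%:E * g u)%E (y - L^-1 *: G y) p -> in_dom g z ->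
  (F p <= F z + ((L + l) / 2 * enorm (z - y) ^+ 2 - L / 2 * enorm (p - z) ^+ 2)%:E)%E.
Proof.
move=> px z_dom.
have Li_gt0 : 0 < L^-1 by rewrite invr_gt0.
have p_dom := is_prox_scale_dom Li_gt0 z_dom px.
have gE u : in_dom g u -> g u = (fine (g u))%:E.
  by move=> u_dom; rewrite fineK // fin_real // g_gtNy.
rewrite (gE p p_dom) (gE z z_dom) -!EFinD lee_fin !enorm_sqr.
have scaleE u : in_dom g u -> ((L^-1)%:E * g u)%E = (L^-1 * fine (g u))%:E.
  by move=> u_dom; rewrite gE.
have := is_prox_optimality (convex_efun_scale (ltW Li_gt0) g_gtNy g_convex)
  (scaleE p p_dom) (scaleE z z_dom) px.
have -> : p - (y - L^-1 *: G y) = (p - y) + L^-1 *: G y.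
  by apply/rowP => i; rewrite !mxE; ring.
rewrite dotvDl dotvZl => opt.
have {}opt : fine (g p) <= fine (g z) + L * dotv (p - y) (z - p) + dotv (G y) (z - p).
  by move: opt; rewrite -(ler_pM2l L_gt0) !mulrDr !mulrA mulfV ?gt_eqF // !mul1r addrA.
move: opt; have := dc_descent y p z.
have -> : z - p = (z - y) - (p - y) by apply/rowP => i; rewrite !mxE; ring.
have -> : p - z = (p - y) - (z - y) by apply/rowP => i; rewrite !mxE; ring.
move: (p - y) (z - y) => a b.
rewrite !dotv_sqrB !dotvBr; lra.
Qed.

Variables (x : nat -> 'rV[R]_n) (beta : nat -> R).
Hypotheses (x0_dom : in_dom g (x 0)) (x_alg1 : alg1 g G L beta x).

Lemma alg1_in_dom k : in_dom g (x k).
Proof.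
elim: k => [//|k IH]; apply: (is_prox_scale_dom _ IH (x_alg1 k)).
by rewrite invr_gt0.
Qed.

Lemma alg1_finite k : g (x k) = (fine (g (x k)))%:E.
Proof. by rewrite fineK // fin_real // g_gtNy alg1_in_dom. Qed.

Lemma alg1_value_le z k : in_dom g z ->
  (F (x k.+1) <= F z + ((L + l) / 2 * enorm (z - extrap x beta k) ^+ 2
                        - L / 2 * enorm (x k.+1 - z) ^+ 2)%:E)%E.
Proof. exact: prox_grad_step (x_alg1 k). Qed.

Lemma HseqE alpha k : Hseq F x alpha k =
  (f1 (x k) - f2 (x k) + fine (g (x k)) + alpha * enorm (x k - x k.-1) ^+ 2)%:E.
Proof. by rewrite /Hseq alg1_finite -!EFinD. Qed.

Lemma Hseq_succ_le alpha k :
  (Hseq F x alpha k.+1 - Hseq F x alpha k <=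
     ((- (L / 2) + alpha) * enorm (x k.+1 - x k) ^+ 2
      + ((L + l) / 2 * beta k ^+ 2 - alpha) * enorm (x k - x k.-1) ^+ 2)%:E)%E.
Proof.
have := alg1_value_le k (alg1_in_dom k).
have -> : x k - extrap x beta k = - beta k *: (x k - x k.-1).
  by apply/rowP => i; rewrite !mxE; ring.
rewrite (alg1_finite k.+1) (alg1_finite k) !HseqE -!EFinD !lee_fin /=.
rewrite !enorm_sqr dotvZl dotvZr; lra.
Qed.

Lemma Hseq_nonincreasing alpha : alpha <= L / 2 ->
  (forall k, (L + l) / 2 * beta k ^+ 2 <= alpha) ->
  nonincreasing_seq (Hseq F x alpha).
Proof.
move=> alpha_le beta_le; apply/nonincreasing_seqP => k.
have := Hseq_succ_le alpha k; rewrite !HseqE -EFinB !lee_fin.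
have := beta_le k; have := sqr_ge0 (enorm (x k.+1 - x k)).
have := sqr_ge0 (enorm (x k - x k.-1)); nra.
Qed.
End ProximalGradient.

Theorem lemma3p1 (R : realType) (n : nat)
    (g : 'rV[R]_n -> \bar R) (f1 f2 : 'rV[R]_n -> R)
    (G1 G2 : 'rV[R]_n -> 'rV[R]_n) (L l : R)
    (x : nat -> 'rV[R]_n) (beta : nat -> R) (alpha : R) :
  proper_fun g -> lsc_fun g -> convex_efun g ->
  convex_fun f1 -> convex_fun f2 ->
  is_gradient f1 G1 -> is_gradient f2 G2 ->
  0 < L -> 0 <= l -> l <= L ->
  lipschitz_with G1 L -> lipschitz_with G2 l ->
  let F := fun u => ((f1 u - f2 u)%:E + g u)%E in
  (exists2 xs, (-oo < F xs)%E & forall u, (F xs <= F u)%E) ->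
  in_dom g (x 0%N) ->
  (forall k, 0 <= beta k <= Num.sqrt (L / (L + l))) ->
  alg1 g (fun u => G1 u - G2 u) L beta x ->
  let betabar := sup (range beta) in
  (L + l) / 2 * betabar ^+ 2 <= alpha <= L / 2 ->
  (forall z, in_dom g z -> forall k : nat,
     (F (x k.+1) <= F z + ((L + l) / 2 * enorm (z - extrap x beta k) ^+ 2
                           - L / 2 * enorm (x k.+1 - z) ^+ 2)%:E)%E)
  /\ (forall k : nat,
     (Hseq F x alpha k.+1 - Hseq F x alpha k <=
        ((- (L / 2) + alpha) * enorm (x k.+1 - x k) ^+ 2
         + ((L + l) / 2 * beta k ^+ 2 - alpha) * enorm (x k - x k.-1) ^+ 2)%:E)%E)
  /\ (forall m k : nat, (m <= k)%N -> (Hseq F x alpha k <= Hseq F x alpha m)%E).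
Proof.
move=> [g_gtNy _] _ g_convex f1_convex f2_convex f1_grad f2_grad L_gt0 l_ge0 _
  G1_lip G2_lip F _ x0_dom beta_bnd x_alg1 betabar /andP[alpha_ge alpha_le].
have beta_le k : (L + l) / 2 * beta k ^+ 2 <= alpha.
  have /andP[beta_ge0 _] := beta_bnd k.
  have beta_le_sup : beta k <= betabar.
    apply: ub_le_sup; last by exists k.
    by exists (Num.sqrt (L / (L + l))) => _ [j _ <-]; case/andP: (beta_bnd j).
  have Ll_ge0 : 0 <= (L + l) / 2 by rewrite divr_ge0 // addr_ge0 // ltW.
  by apply: le_trans alpha_ge; rewrite ler_wpM2l // !expr2 ler_pM.
split; first by move=> z z_dom k; apply: alg1_value_le.
split; first by move=> k; apply: Hseq_succ_le.
exact: (Hseq_nonincreasing g_gtNy g_convex f1_convex f2_convex f1_grad f2_grad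
  L_gt0 G1_lip G2_lip x0_dom x_alg1 alpha_le beta_le).
Qed.
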